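(* Let $(\Omega,\Sigma,\mu)$ be a measure space with $\mu(\Omega)=1$, let $p\ge 1$, let $\chi\in\mathcal W^+_p$, and let $\{\chi_k\}_{k\in\mathbb N}$ be a sequence of normalized Young weights converging to $\chi$ uniformly on compact subsets of $\mathbb R$. Let $f$ be a bounded $\mu$-measurable function. Then $f\in L^\chi(\mu)$ and $f\in L^{\chi_k}(\mu)$ for all $k$, and $$\lim_{k\to\infty}\|f\|_{\chi_k,\mu}=\|f\|_{\chi,\mu}.$$
   Context: A normalized Young weight is a function $\chi:\mathbb R\to[0,\infty]$ that is convex, even, lower semicontinuous, with $\chi(0)=0$ and $1\in\partial\chi(1)$ (here $\partial\chi(l)$ is the set of subgradients of $\chi$ at $l$). For $p\ge1$, $\mathcal W^+_p$ denotes the set of finite-valued normalized Young weights satisfying $l\,\chi'(l)\le p\,\chi(l)$ for all $l>0$ and every subgradient $\chi'(l)\in\partial\chi(l)$. For a normalized Young weight $\chi$, $L^\chi(\mu)$ is the set of measurable $f:\Omega\to[-\infty,\infty]$ such that $\int_\Omega\chi(rf)\,d\mu<\infty$ for some $r>0$, with the norm $\|f\|_{\chi,\mu}=\inf\{r>0:\int_\Omega\chi(f/r)\,d\mu\le\chi(1)\}$. *)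

From HB Require Import structures.
From mathcomp Require Import all_boot all_order all_algebra.
From mathcomp Require Import all_classical all_reals all_analysis.
Set Implicit Arguments. Unset Strict Implicit. Unset Printing Implicit Defensive.
Import Order.TTheory GRing.Theory Num.Theory.
Import numFieldNormedType.Exports.
Local Open Scope classical_set_scope.
Local Open Scope ring_scope.
Local Open Scope ereal_scope.

Section Young.
Context {R : realType}.

(* c is a subgradient of the extended-valued function chi at l
   (subdifferential is empty where chi is infinite) *)
Definition subgrad (chi : R -> \bar R) (l c : R) : Prop :=
  chi l \is a fin_num /\ forall y : R, chi l + (c * (y - l))%:E <= chi y.

Definition econvex (chi : R -> \bar R) : Prop :=
  forall (x y t : R), (0 < t < 1)%R ->
    chi (t * x + (1 - t) * y)%R <= t%:E * chi x + (1 - t)%:E * chi y.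

Definition young_weight (chi : R -> \bar R) : Prop :=
  (forall x, 0 <= chi x) /\
  econvex chi /\
  (forall x, chi (- x)%R = chi x) /\
  lower_semicontinuous chi /\
  chi 0%R = 0 /\
  subgrad chi 1 1.

Definition W_plus (p : R) (chi : R -> \bar R) : Prop :=
  [/\ young_weight chi,
      (forall x, chi x \is a fin_num) &
      (forall l c, (0 < l)%R -> subgrad chi l c -> (l * c)%:E <= p%:E * chi l)].

Definition in_Lchi d (T : measurableType d) (mu : {measure set T -> \bar R})
  (chi : R -> \bar R) (f : T -> R) : Prop :=
  exists2 r : R, (0 < r)%R & \int[mu]_x chi (r * f x)%R < +oo.

Definition orlicz_norm d (T : measurableType d) (mu : {measure set T -> \bar R})
  (chi : R -> \bar R) (f : T -> R) : \bar R :=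
  ereal_inf [set r%:E | r in [set r : R | (0 < r)%R /\
                        \int[mu]_x chi (f x / r)%R <= chi 1%R]].

Definition cvg_unif_compact (chik : nat -> R -> \bar R) (chi : R -> \bar R) : Prop :=
  forall K : set R, compact K -> forall e : R, (0 < e)%R ->
    \forall k \near \oo, forall x, K x -> `|chik k x - chi x| < e%:E.

End Young.

(* Since mu is a probability measure and |f| <= M, every integral
   int chi_k (f / r) dmu only involves chi_k on the compact segment
   [-(M/r + 1), M/r + 1], where chi_k converges uniformly; so these integrals,
   and chi_k(1), converge for each fixed r > 0.  Call r admissible for chi
   if int chi (f/r) <= chi(1), and let n = ||f||_chi.  If r > n,
   some r' < r is admissible for chi, and convexity gives
   int chi (f/r) <= (r'/r) chi(1) < chi(1); the strict gap survives the
   perturbation, so r is admissible for chi_k for large k.  If 0 < r < n, then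
   int chi (f/r) > chi(1), again a strict gap, and since the integral decreases
   in r no r'' <= r is admissible for chi_k for large k. *)
From HB Require Import structures.
From mathcomp Require Import all_boot all_order all_algebra.
From mathcomp Require Import all_classical all_reals all_analysis.
From mathcomp Require Import measurable_realfun lra.
Import Order.TTheory GRing.Theory Num.Theory.
Import numFieldNormedType.Exports.
Local Open Scope classical_set_scope.
Local Open Scope ring_scope.

Section ereal_facts.
Context {R : realType}.
Local Open Scope ereal_scope.

Lemma lte_dist_leD (x y : \bar R) (e : R) : y \is a fin_num ->
  `|x - y| < e%:E -> x <= y + e%:E /\ y <= x + e%:E.
Proof.
move=> /fineK <-; case: x => [x| |] //; rewrite -EFinB -EFinD lte_fin ltr_norml.
by move=> /andP[? ?]; rewrite -!EFinD !lee_fin; split; lra.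
Qed.

Lemma cvge_fin_near (I : Type) (F : set_system I) {FF : Filter F}
    (u : I -> \bar R) (a : R) :
  (forall i, u i \is a fin_num) ->
  (forall e : R, (0 < e)%R ->
    \forall i \near F, u i <= a%:E + e%:E /\ a%:E <= u i + e%:E) ->
  u i @[i --> F] --> a%:E.
Proof.
move=> u_fin u_near; apply: cvg_EFin; first exact: nearW.
apply/cvgrPdist_le => e e0; apply: filterS (u_near e e0) => i [].
rewrite /= -[u i]fineK // -!EFinD !lee_fin ler_distl => ? ?.
by apply/andP; split; lra.
Qed.

End ereal_facts.

Section young_weight_theory.
Context {R : realType} (c : R -> \bar R).
Hypothesis yc : young_weight c.
Local Open Scope ereal_scope.

Lemma young_weight_ge0 x : 0 <= c x.
Proof. by case: yc. Qed.

Lemma young_weight_norm x : c `|x|%R = c x.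
Proof.
have [_ [_ [c_even _]]] := yc.
by have [x0|x0] := leP 0%R x; [rewrite ger0_norm | rewrite ltr0_norm ?c_even].
Qed.

Lemma young_weight_fin1 : c 1%R \is a fin_num.
Proof. by have [_ [_ [_ [_ [_ []]]]]] := yc. Qed.

Lemma young_weight_scale (s x : R) : (0 < s <= 1)%R -> c (s * x)%R <= s%:E * c x.
Proof.
have [_ [c_cvx [_ [_ [c0 _]]]]] := yc.
case/andP=> s_gt0; rewrite le_eqVlt => /predU1P[->|s_lt1].
  by rewrite mul1r mul1e.
have := c_cvx x 0%R s; rewrite mulr0 addr0 c0 mule0 adde0; apply.
by rewrite s_gt0.
Qed.

Lemma young_weight_le (x y : R) : (`|x| <= `|y|)%R -> c x <= c y.
Proof.
rewrite -young_weight_norm -(young_weight_norm y).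
have [->|x_neq0] := eqVneq `|x|%R 0%R => xy.
  by have [_ [_ [_ [_ [-> _]]]]] := yc; exact: young_weight_ge0.
have x_gt0 : (0 < `|x|)%R by rewrite lt0r x_neq0 normr_ge0.
have y_gt0 : (0 < `|y|)%R := lt_le_trans x_gt0 xy.
have -> : `|x|%R = (`|x| / `|y| * `|y|)%R by rewrite divfK ?gt_eqF.
apply: le_trans (young_weight_scale _ _ _) _.
  by rewrite divr_gt0 // ler_pdivrMr // mul1r.
apply: gee_pMl => //; first exact: young_weight_ge0.
by rewrite lee_fin ler_pdivrMr // mul1r.
Qed.

Lemma measurable_young_weight_comp d (T : measurableType d) (g : T -> R) :
  measurable_fun setT g -> measurable_fun setT (fun x => c (g x)).
Proof.
have [_ [_ [_ [c_lsc _]]]] := yc.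
exact: (measurableT_comp (lower_semicontinuous_measurable c_lsc)).
Qed.

End young_weight_theory.

Lemma cvg_unif_compact_segment {R : realType} (chik : nat -> R -> \bar R)
    (chi : R -> \bar R) (B e : R) :
  (forall x, chi x \is a fin_num) -> cvg_unif_compact chik chi -> 0 < e ->
  \forall k \near \oo, forall x, `|x| <= B ->
    (chik k x <= chi x + e%:E /\ chi x <= chik k x + e%:E)%E.
Proof.
move=> chi_fin chik_cvg e_gt0.
apply: filterS (chik_cvg _ (@segment_compact R (- B) B) e e_gt0) => k chik_near x xB.
by apply: lte_dist_leD => //; apply: chik_near; rewrite /= in_itv /= -ler_norml.
Qed.

Lemma W_plus_gt0_at1 {R : realType} {p : R} {chi : R -> \bar R} :
  W_plus p chi -> (0 < chi 1%R)%E.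
Proof.
case=> ychi _ /(_ 1%R 1%R ltr01) chi_sub.
rewrite lt0e young_weight_ge0 // andbT; apply/eqP => chi1.
have [_ [_ [_ [_ [_ sub1]]]]] := ychi.
by have := chi_sub sub1; rewrite chi1 mule0 mulr1 lee_fin ler10.
Qed.

Section probability_integral.
Context {R : realType} {d : measure_display} {T : measurableType d}
  (mu : {measure set T -> \bar R}).
Hypothesis mu_setT : mu setT = 1%E.
Local Open Scope ereal_scope.

Lemma integral_le_cst (h : T -> \bar R) (a : \bar R) :
  measurable_fun setT h -> (forall x, 0 <= h x) -> (forall x, h x <= a) ->
  \int[mu]_x h x <= a.
Proof.
move=> mh h0 ha; apply: (@le_trans _ _ (\int[mu]_x cst a x)).
  by apply: ge0_le_integral => //; exact: measurable_cst.
by rewrite integral_cst // mu_setT mule1.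
Qed.

Lemma integral_le_addr (h1 h2 : T -> \bar R) (e : R) : (0 <= e)%R ->
  measurable_fun setT h1 -> measurable_fun setT h2 ->
  (forall x, 0 <= h1 x) -> (forall x, 0 <= h2 x) ->
  (forall x, h1 x <= h2 x + e%:E) ->
  \int[mu]_x h1 x <= \int[mu]_x h2 x + e%:E.
Proof.
move=> e0 mh1 mh2 h1_ge0 h2_ge0 h12.
apply: (@le_trans _ _ (\int[mu]_x (h2 x + cst e%:E x))).
  by apply: ge0_le_integral => //; apply: emeasurable_funD => //;
    exact: measurable_cst.
by rewrite ge0_integralD // integral_cst // mu_setT mule1.
Qed.

End probability_integral.

Section orlicz_norm_theory.
Context {R : realType} {d : measure_display} {T : measurableType d}
  {mu : {measure set T -> \bar R}} {c : R -> \bar R} {f : T -> R}.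
Local Open Scope ereal_scope.

Lemma orlicz_norm_le (r : R) : (0 < r)%R ->
  \int[mu]_x c (f x / r)%R <= c 1%R -> orlicz_norm mu c f <= r%:E.
Proof. by move=> r0 h; apply: ereal_inf_lbound; exists r. Qed.

Lemma orlicz_norm_ge (a : R) :
  (forall r : R, (0 < r)%R -> \int[mu]_x c (f x / r)%R <= c 1%R -> (a <= r)%R) ->
  a%:E <= orlicz_norm mu c f.
Proof.
by move=> h; apply/ereal_infP => _ [r [r0 hr] <-]; rewrite lee_fin; exact: h.
Qed.

Lemma orlicz_norm_lt (r : R) : orlicz_norm mu c f < r%:E ->
  exists2 r' : R, (0 < r' < r)%R & \int[mu]_x c (f x / r')%R <= c 1%R.
Proof.
move/ereal_inf_lt => [_ [r' [r'0 h] <-]]; rewrite lte_fin => r'r.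
by exists r'; rewrite ?r'0.
Qed.

End orlicz_norm_theory.

Section bounded_function.
Context {R : realType} {d : measure_display} {T : measurableType d}
  {mu : {measure set T -> \bar R}} {f : T -> R} {M : R}.
Hypotheses (mu_setT : mu setT = 1%E) (mf : measurable_fun setT f).
Hypotheses (M_gt0 : 0 < M) (f_le_M : forall x, `|f x| <= M).
Local Open Scope ereal_scope.

Lemma measurable_young_weight_divr (c : R -> \bar R) (r : R) :
  young_weight c -> measurable_fun setT (fun x => c (f x / r)%R).
Proof.
by move=> yc; apply: measurable_young_weight_comp => //; exact: measurable_funM.
Qed.

Lemma integral_young_weight_le (c : R -> \bar R) (a : R) : young_weight c ->
  \int[mu]_x c (a * f x)%R <= c (a * M)%R.
Proof.
move=> yc; apply: integral_le_cst => //.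
- by apply: measurable_young_weight_comp => //; exact: measurable_funM.
- by move=> x; exact: young_weight_ge0.
- move=> x; apply: young_weight_le => //.
  by rewrite !normrM (gtr0_norm M_gt0) ler_wpM2l.
Qed.

Lemma integral_young_weight_divr_le (c : R -> \bar R) (r : R) : young_weight c ->
  \int[mu]_x c (f x / r)%R <= c (M / r)%R.
Proof.
move=> yc; under eq_integral do rewrite mulrC.
by rewrite mulrC; exact: integral_young_weight_le.
Qed.

Lemma in_Lchi_bounded (c : R -> \bar R) : young_weight c -> in_Lchi mu c f.
Proof.
move=> yc; exists M^-1%R; first by rewrite invr_gt0.
apply: le_lt_trans (integral_young_weight_le _ M^-1%R yc) _.
by rewrite mulVf ?gt_eqF // ltey_eq young_weight_fin1.
Qed.

Lemma orlicz_norm_bounded (c : R -> \bar R) : young_weight c ->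
  0 <= orlicz_norm mu c f <= M%:E.
Proof.
move=> yc; apply/andP; split.
  by apply: orlicz_norm_ge => r r0 _; exact: ltW.
apply: orlicz_norm_le => //; apply: le_trans (integral_young_weight_divr_le _ M yc) _.
by rewrite divff ?gt_eqF.
Qed.

Lemma orlicz_norm_fin_num (c : R -> \bar R) : young_weight c ->
  orlicz_norm mu c f \is a fin_num.
Proof.
move=> /orlicz_norm_bounded /andP[N0 NM].
by rewrite ge0_fin_numE // (le_lt_trans NM (ltry _)).
Qed.

Lemma integral_young_weight_rescale (c : R -> \bar R) (r r' : R) :
  young_weight c -> (0 < r' <= r)%R ->
  \int[mu]_x c (f x / r)%R <= (r' / r)%:E * \int[mu]_x c (f x / r')%R.
Proof.
move=> yc /andP[r'_gt0 r'r]; have r_gt0 := lt_le_trans r'_gt0 r'r.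
have s_ge0 : (0 <= r' / r)%R by rewrite divr_ge0 // ltW.
rewrite -ge0_integralZl_EFin //; first last.
- exact: measurable_young_weight_divr.
- by move=> x _; exact: young_weight_ge0.
apply: ge0_le_integral => //.
- by move=> x _; exact: young_weight_ge0.
- exact: measurable_young_weight_divr.
- by apply: measurable_funeM; exact: measurable_young_weight_divr.
move=> x _; have -> : (f x / r = r' / r * (f x / r'))%R.
  by rewrite [RHS]mulrC -mulrA mulKf ?gt_eqF.
apply: young_weight_scale => //.
by rewrite divr_gt0 // ler_pdivrMr // mul1r.
Qed.

Lemma integral_young_weight_le_add (c1 c2 : R -> \bar R) (r B e : R) :
  young_weight c1 -> young_weight c2 -> (0 < r)%R -> (M / r <= B)%R -> (0 <= e)%R ->
  (forall x, (`|x| <= B)%R -> c1 x <= c2 x + e%:E) ->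
  \int[mu]_x c1 (f x / r)%R <= \int[mu]_x c2 (f x / r)%R + e%:E.
Proof.
move=> yc1 yc2 r_gt0 MB e0 c12; apply: integral_le_addr => //.
- exact: measurable_young_weight_divr.
- exact: measurable_young_weight_divr.
- by move=> x; exact: young_weight_ge0.
- by move=> x; exact: young_weight_ge0.
move=> x; apply: c12; apply: le_trans MB.
by rewrite normrM normfV (gtr0_norm r_gt0) ler_pM2r ?invr_gt0.
Qed.

Lemma integral_young_weight_divr_antimono (c : R -> \bar R) (r r' : R) :
  young_weight c -> (0 < r' <= r)%R ->
  \int[mu]_x c (f x / r)%R <= \int[mu]_x c (f x / r')%R.
Proof.
move=> yc r'r; have /andP[r'_gt0 r'_le_r] := r'r.
have r_gt0 := lt_le_trans r'_gt0 r'_le_r.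
apply: le_trans (integral_young_weight_rescale _ _ _ yc r'r) _.
apply: gee_pMl => //.
  by apply: integral_ge0 => x _; exact: young_weight_ge0.
by rewrite lee_fin ler_pdivrMr // mul1r.
Qed.

Section young_weight_limit.
Context {chi : R -> \bar R} {chik : nat -> R -> \bar R}.
Hypotheses (ychi : young_weight chi) (chi_fin : forall x, chi x \is a fin_num).
Hypotheses (chi1_gt0 : 0 < chi 1%R) (yk : forall k, young_weight (chik k)).
Hypothesis chik_cvg : cvg_unif_compact chik chi.

Lemma young_weight_integral_near (r e : R) : (0 < r)%R -> (0 < e)%R ->
  \forall k \near \oo, [/\
    \int[mu]_x chik k (f x / r)%R <= \int[mu]_x chi (f x / r)%R + e%:E,
    \int[mu]_x chi (f x / r)%R <= \int[mu]_x chik k (f x / r)%R + e%:E,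
    chik k 1%R <= chi 1%R + e%:E &
    chi 1%R <= chik k 1%R + e%:E].
Proof.
move=> r_gt0 e_gt0; have e_ge0 := ltW e_gt0.
have Mr_ge0 : (0 <= M / r)%R by rewrite divr_ge0 // ltW.
have := @cvg_unif_compact_segment _ _ _ (M / r + 1)%R _ chi_fin chik_cvg e_gt0.
apply: filterS => k chik_near.
have MrB : (M / r <= M / r + 1)%R by rewrite lerDl.
have one_B : (`|1| <= M / r + 1)%R by rewrite normr1 lerDr.
split; [| | exact: (chik_near 1%R one_B).1 | exact: (chik_near 1%R one_B).2].
- apply: (integral_young_weight_le_add _ _ _ (M / r + 1)%R) => //.
  by move=> x /chik_near[].
- apply: (integral_young_weight_le_add _ _ _ (M / r + 1)%R) => //.
  by move=> x /chik_near[].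
Qed.

Lemma orlicz_norm_near_le (e : R) : (0 < e)%R ->
  \forall k \near \oo, orlicz_norm mu (chik k) f <= orlicz_norm mu chi f + e%:E.
Proof.
move=> e_gt0; have /fineK NE := orlicz_norm_fin_num _ ychi.
set n := fine _ in NE; have /fineK chi1E := chi_fin 1%R.
set c1 := fine _ in chi1E.
have c1_gt0 : (0 < c1)%R by rewrite -lte_fin chi1E.
have n_ge0 : (0 <= n)%R.
  by rewrite -lee_fin NE; case/andP: (orlicz_norm_bounded _ ychi).
have r_gt0 : (0 < n + e)%R by lra.
have [r' /andP[r'_gt0 r'_lt] adm] : exists2 r', (0 < r' < n + e)%R &
    \int[mu]_x chi (f x / r')%R <= chi 1%R.
  by apply: orlicz_norm_lt; rewrite -NE lte_fin; lra.
set s := (r' / (n + e))%R.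
have s_lt1 : (s < 1)%R by rewrite ltr_pdivrMr // mul1r.
have int_chi : \int[mu]_x chi (f x / (n + e))%R <= (s * c1)%:E.
  apply: le_trans (integral_young_weight_rescale _ _ r' ychi _) _.
    by rewrite r'_gt0 ltW.
  by rewrite [in X in _ <= X]EFinM chi1E lee_wpmul2l // lee_fin divr_ge0 // ltW.
set δ := ((1 - s) * c1 / 2)%R.
have δ_gt0 : (0 < δ)%R by rewrite divr_gt0 // mulr_gt0 // subr_gt0.
apply: filterS (young_weight_integral_near _ _ r_gt0 δ_gt0) => k [int_le _ _].
rewrite -chi1E -NE -EFinD -leeBlDr // -EFinB => chik1_ge.
apply: orlicz_norm_le => //; apply: le_trans int_le _.
apply: le_trans (leeD2r _ int_chi) _; apply: le_trans chik1_ge.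
by rewrite -EFinD lee_fin /δ; lra.
Qed.

Lemma orlicz_norm_near_ge (e : R) : (0 < e)%R ->
  \forall k \near \oo, orlicz_norm mu chi f <= orlicz_norm mu (chik k) f + e%:E.
Proof.
move=> e_gt0; have /fineK NE := orlicz_norm_fin_num _ ychi.
set n := fine _ in NE; have /fineK chi1E := chi_fin 1%R.
set c1 := fine _ in chi1E.
have [ne_le0|r_gt0] := leP (n - e)%R 0%R.
  apply: nearW => k; rewrite -NE; apply: (@le_trans _ _ e%:E).
    by rewrite lee_fin; lra.
  by rewrite leeDr //; case/andP: (orlicz_norm_bounded _ (yk k)).
set r := (n - e)%R.
have int_gt : c1%:E < \int[mu]_x chi (f x / r)%R.
  rewrite ltNge chi1E; apply/negP => /(orlicz_norm_le _ r_gt0).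
  by rewrite -NE lee_fin /r; lra.
have /fineK FE : \int[mu]_x chi (f x / r)%R \is a fin_num.
  rewrite ge0_fin_numE; last by apply: integral_ge0 => x _; exact: young_weight_ge0.
  apply: le_lt_trans (integral_young_weight_divr_le _ r ychi) _.
  by rewrite ltey_eq chi_fin.
set F := fine _ in FE; rewrite -FE lte_fin in int_gt.
set δ := ((F - c1) / 3)%R.
have δ_gt0 : (0 < δ)%R by rewrite divr_gt0 // subr_gt0.
apply: filterS (young_weight_integral_near _ _ r_gt0 δ_gt0) => k [_ int_ge chik1_le _].
rewrite -NE (_ : n%:E = r%:E + e%:E); last by rewrite -EFinD subrK.
apply: leeD2r.
apply: orlicz_norm_ge => r'' r''_gt0 adm; rewrite leNgt; apply/negP => r''_lt.
have r''_le : (0 < r'' <= r)%R by rewrite r''_gt0 ltW.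
have mono := integral_young_weight_divr_antimono _ r r'' (yk k) r''_le.
have := le_trans int_ge (leeD2r δ%:E (le_trans mono (le_trans adm chik1_le))).
by rewrite -FE -chi1E -!EFinD lee_fin /δ; lra.
Qed.

End young_weight_limit.

End bounded_function.

Theorem proposition1p6 (R : realType) (d : measure_display) (T : measurableType d)
  (mu : {measure set T -> \bar R}) (p : R) (chi : R -> \bar R)
  (chik : nat -> R -> \bar R) (f : T -> R) :
  mu setT = 1%E ->
  1 <= p ->
  W_plus p chi ->
  (forall k, young_weight (chik k)) ->
  cvg_unif_compact chik chi ->
  measurable_fun setT f ->
  (exists M : R, forall x, `|f x| <= M) ->
  [/\ in_Lchi mu chi f,
      (forall k, in_Lchi mu (chik k) f) &
      (fun k => orlicz_norm mu (chik k) f) @ \oo --> orlicz_norm mu chi f].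
Proof.
move=> mu_setT _ Wchi yk chik_cvg mf [M f_le_M].
have chi1_gt0 := W_plus_gt0_at1 Wchi; have [ychi chi_fin _] := Wchi.
have M1_gt0 : 0 < `|M| + 1 by rewrite ltr_wpDl.
have f_le_M1 x : `|f x| <= `|M| + 1.
  by rewrite (le_trans (f_le_M x)) // (le_trans (ler_norm M)) // lerDl.
have in_L := in_Lchi_bounded mu_setT mf M1_gt0 f_le_M1.
have N_fin := orlicz_norm_fin_num mu_setT mf M1_gt0 f_le_M1.
split; [exact: in_L | by move=> k; exact: in_L |].
rewrite -(fineK (N_fin _ ychi)).
apply: cvge_fin_near => [k | e e_gt0]; first exact: N_fin.
rewrite fineK ?N_fin //.
have near_le := orlicz_norm_near_le mu_setT mf M1_gt0 f_le_M1 ychi chi_fin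
  chi1_gt0 yk chik_cvg e e_gt0.
have near_ge := orlicz_norm_near_ge mu_setT mf M1_gt0 f_le_M1 ychi chi_fin yk
  chik_cvg e e_gt0.
by apply: filterS2 near_le near_ge => k.
Qed.
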